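(* Let $G=(V,E)$ be an $n$-vertex finite simple undirected graph with distinct vertex IDs, whose neighborhood independence is bounded by a constant $c$, and let $K$ be a positive integer with $\delta(G)\ge K$. Then the procedure Efficient-VM run on $G$ with parameter $K$ terminates within $O(\log^* n + K^4)$ rounds.
   Context: $\Gamma(v)$ is the neighbor set of $v$, $\deg(v)=|\Gamma(v)|$, $\delta(G)=\min_v\deg(v)$. The neighborhood independence of $G$ is the maximum over $v$ of the size of an independent set contained in $\Gamma(v)$. Model: synchronous CONGEST model (in each round every vertex sends an $O(\log n)$-bit message to each neighbor and computes locally). Operation $K$-Next-Modulo$(v,\Gamma(v),K)$: list $\Gamma(v)\cup\{v\}$ in ascending ID order as $u_1,\dots,u_d$ ($d=\deg(v)+1$) with $v=u_i$; $v$ selects $u_{i+1},\dots,u_{i+K}$, indices cyclic modulo $d$. Procedure Efficient-VM$(G,K)$: (1) every vertex selects its $K$ neighbors by $K$-Next-Modulo (one round); let $G'=(V,E')$ with $E'$ the set of edges $\{v,u\}$ such that $v$ selected $u$, and $\Delta'$ its maximum degree; (2) compute a 2-hop coloring of $G'$ (vertices at distance at most $2$ in $G'$ get distinct colors) by running Linial's algorithm on $G'^2$, which uses $O(\Delta'^4)$ colors and $\log^* n+O(1)$ rounds; (3) process the color classes one per round in round-robin order, each active vertex distributing its backup data to the $K$ vertices it selected. *)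

From mathcomp Require Import all_boot.
Set Implicit Arguments. Unset Strict Implicit. Unset Printing Implicit Defensive.

Section Defs.
Variables (T : finType) (e : rel T) (id : T -> nat).

Definition deg (v : T) : nat := #|[set u | e v u]|.

Definition nbr_indep_le (c : nat) : Prop :=
  forall (v : T) (S : {set T}), S \subset [set u | e v u] ->
    (forall x y, x \in S -> y \in S -> ~~ e x y) -> #|S| <= c.

Definition closed_nbhd_sorted (v : T) : seq T :=
  sort (fun x y => id x <= id y) [seq u <- enum T | (u == v) || e v u].

(* K-Next-Modulo(v, Gamma(v), K): v = u_i selects u_{i+1},...,u_{i+K} cyclically
   (0-based indices here). *)
Definition k_next_modulo (K : nat) (v : T) : seq T :=
  let s := closed_nbhd_sorted v in
  let d := size s in
  let i := index v s in
  [seq nth v s ((i + j) %% d) | j <- iota 1 K].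

Definition eG' (K : nat) : rel T :=
  fun x y => (y \in k_next_modulo K x) || (x \in k_next_modulo K y).

Definition maxdeg_G' (K : nat) : nat := \max_(v : T) #|[set u | eG' K v u]|.

Definition two_hop_coloring (K : nat) (col : T -> nat) : Prop :=
  forall x y, x != y -> (eG' K x y || [exists z, eG' K x z && eG' K z y]) ->
    col x != col y.

Definition num_colors (col : T -> nat) : nat :=
  size (undup [seq col x | x <- enum T]).

(* Rounds of Efficient-VM: 1 round for selection, [linial_rounds] rounds for the
   2-hop coloring, then one round per color class (round robin). *)
Definition efficient_vm_rounds (linial_rounds : nat) (col : T -> nat) : nat :=
  1 + linial_rounds + num_colors col.
End Defs.

Fixpoint logstar_fuel (f n : nat) : nat :=
  if n <= 1 then 0 else
  match f with 0 => 0 | f'.+1 => (logstar_fuel f' (trunc_log 2 n)).+1 end.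
Definition logstar (n : nat) : nat := logstar_fuel n n.

From mathcomp Require Import all_boot zify.
Set Implicit Arguments. Unset Strict Implicit. Unset Printing Implicit Defensive.

(* The round count is 1 + (log* n + O(1)) + O(Delta'^4), so it suffices to show
   Delta' = O(K). Besides its own K selections, a vertex v of G' is adjacent to
   the vertices that select it, all of which lie in Gamma(v). A selector u with
   id u < id v reaches v without wrapping around its cyclic list, so fewer than
   K neighbours of u have ids strictly between those of u and v; a selector
   with id u > id v wraps around, so fewer than K neighbours of u have larger
   ids than u. Hence, in either half of the selectors, each vertex has fewer
   than K neighbours of larger id inside that half, and repeatedly taking the
   vertex of minimum id and discarding its neighbours yields an independent
   subset of Gamma(v) of size at least a K-th of the half. As this subset has
   size at most c, Delta' <= K + 1 + 2Kc. *)

Lemma card_index_window (T : finType) (s : seq T) (Y : {set T}) a b :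
  uniq s -> {in Y, forall y, y \in s /\ a < index y s < b} -> #|Y| <= b - a.+1.
Proof.
move=> s_uniq Y_win; rewrite cardE -(size_map (index^~ s)).
rewrite -(size_iota a.+1 (b - a.+1)); apply: uniq_leq_size.
  rewrite map_inj_in_uniq ?enum_uniq // => x y; rewrite !mem_enum.
  move=> /Y_win[xs _] /Y_win[ys _] eq_idx.
  by rewrite -(nth_index x xs) eq_idx nth_index.
move=> k /mapP[y]; rewrite mem_enum => /Y_win[_ /andP[ay yb]] ->.
by rewrite mem_iota; lia.
Qed.

Section GreedyIndependentSet.
Variables (T : finType) (e : rel T) (r : T -> nat).
Hypotheses (e_sym : symmetric e) (e_irr : irreflexive e) (r_inj : injective r).

Lemma greedy_independent_set K (S : {set T}) :
  {in S, forall x, #|[set y in S | e x y & r x < r y]| < K} ->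
  exists2 I : {set T}, I \subset S &
    {in I &, forall x y, ~~ e x y} /\ #|S| <= K * #|I|.
Proof.
have [n] := ubnP #|S|; elim: n S => // n IH S ltSn fwd_small.
have [->|[x0 x0S]] := set_0Vmem S.
  by exists set0; rewrite ?sub0set ?cards0 //; split=> // x y; rewrite inE.
have [x xS x_min] := @arg_minnP _ _ (fun y => y \in S) r x0S.
pose N := x |: [set y in S | e x y].
have N_small : #|N| <= K.
  rewrite cardsU1; apply: leq_trans (leq_add (leq_b1 _) (leqnn _)) _; rewrite add1n.
  apply: leq_trans (fwd_small x xS); apply/subset_leq_card/subsetP => y.
  rewrite !inE => /andP[yS exy]; rewrite yS exy ltn_neqAle x_min // andbT.
  by apply: contraTneq exy => /r_inj ->; rewrite e_irr.
have NS : N \subset S.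
  by rewrite /N subUset sub1set xS; apply/subsetP => y; rewrite inE => /andP[].
pose S' := S :\: N.
have [||I' I'S' [I'_indep I'_big]] := IH S'.
- have N_pos : 0 < #|N| by apply/card_gt0P; exists x; rewrite setU11.
  by rewrite cardsDS //; move: (subset_leq_card NS); lia.
- move=> y /setDP[yS _]; apply: leq_ltn_trans (fwd_small y yS).
  by apply/subset_leq_card/subsetP => z; rewrite !inE => /and3P[/andP[_ ->] -> ->].
have x_indep y : y \in I' -> ~~ e x y.
  by move=> /(subsetP I'S') /setDP[yS]; rewrite !inE yS negb_or => /andP[].
have xI' : x \notin I' by apply/negP => /(subsetP I'S') /setDP[_]; rewrite setU11.
exists (x |: I').
  by rewrite subUset sub1set xS (subset_trans I'S') ?subsetDl.
split.
  move=> y z /setU1P[-> | yI'] /setU1P[-> | zI']; rewrite ?e_irr ?x_indep //.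
    by rewrite e_sym x_indep.
  exact: I'_indep.
move: I'_big; rewrite cardsU1 xI' cardsDS //; lia.
Qed.

End GreedyIndependentSet.

Lemma card_sparse_nbhd_subset (T : finType) (e : rel T) (r : T -> nat) c K v
    (U : {set T}) :
  symmetric e -> irreflexive e -> injective r -> nbr_indep_le e c ->
  U \subset [set u | e v u] ->
  {in U, forall x, #|[set y in U | e x y & r x < r y]| < K} -> #|U| <= K * c.
Proof.
move=> e_sym e_irr r_inj e_indep Uv U_sparse.
have [I IU [I_indep U_le]] := greedy_independent_set e_sym e_irr r_inj U_sparse.
by rewrite (leq_trans U_le) // leq_mul2l (e_indep v) ?orbT // (subset_trans IU).
Qed.

Lemma sorted_key_ltn_index (T : eqType) (f : T -> nat) (s : seq T) a b :
  sorted (fun x y => f x <= f y) s -> a \in s -> b \in s ->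
  f a < f b -> index a s < index b s.
Proof.
move=> s_sorted a_s b_s; apply: contraTT; rewrite -!leqNgt => le_ba.
have f_trans : transitive (fun x y => f x <= f y) by move=> y x z; apply: leq_trans.
exact: (sorted_leq_index f_trans (fun x => leqnn (f x)) s_sorted _ _ b_s a_s le_ba).
Qed.

Section KNextModulo.
Variables (T : finType) (e : rel T) (id : T -> nat).
Hypotheses (e_irr : irreflexive e).

Local Notation nbhd x := (closed_nbhd_sorted e id x).

Lemma mem_closed_nbhd_sorted x y : (y \in nbhd x) = (y == x) || e x y.
Proof. by rewrite mem_sort mem_filter mem_enum andbT. Qed.

Lemma closed_nbhd_sorted_self x : x \in nbhd x.
Proof. by rewrite mem_closed_nbhd_sorted eqxx. Qed.

Lemma closed_nbhd_sorted_uniq x : uniq (nbhd x).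
Proof. by rewrite sort_uniq filter_uniq ?enum_uniq. Qed.

Lemma size_closed_nbhd_sorted x : size (nbhd x) = (deg e x).+1.
Proof.
rewrite -(card_uniqP (closed_nbhd_sorted_uniq x)).
transitivity #|x |: [set u | e x u]|; last by rewrite cardsU1 inE e_irr.
by apply: eq_card => y; rewrite mem_closed_nbhd_sorted !inE.
Qed.

Lemma closed_nbhd_sorted_ltn_index x a b :
  a \in nbhd x -> b \in nbhd x -> id a < id b -> index a (nbhd x) < index b (nbhd x).
Proof. by apply: sorted_key_ltn_index; apply: sort_sorted => ? ?; apply: leq_total. Qed.

(* The index of v is (i + j) %% d, written out using i, j < d. *)
Lemma k_next_moduloP K x v : K < size (nbhd x) -> v \in k_next_modulo e id K x ->
  let i := index x (nbhd x) in let d := size (nbhd x) in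
  exists j, [/\ 0 < j <= K, v \in nbhd x & index v (nbhd x) = i + j - (d <= i + j) * d].
Proof.
rewrite /k_next_modulo; set s := nbhd x; set i := index x s; set d := size s.
move=> Kd /mapP[j]; rewrite mem_iota => /andP[j_pos j_le] ->.
have i_lt : i < d by rewrite index_mem closed_nbhd_sorted_self.
have p_lt : (i + j) %% d < d by rewrite ltn_mod; lia.
exists j; split; first lia.
- exact: mem_nth.
- rewrite index_uniq ?closed_nbhd_sorted_uniq // modnD; last lia.
  by rewrite !modn_small //; lia.
Qed.

Lemma k_next_modulo_nbr K x v :
  K < size (nbhd x) -> v \in k_next_modulo e id K x -> v != x -> e x v.
Proof.
move=> Kd /(k_next_moduloP Kd)[j [_ vs _]].
by move: vs; rewrite mem_closed_nbhd_sorted => /predU1P[->|]; rewrite ?eqxx.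
Qed.

Lemma k_next_modulo_between K x v :
  K < size (nbhd x) -> v \in k_next_modulo e id K x -> id x < id v ->
  #|[set y | [&& e x y, id x < id y & id y < id v]]| < K.
Proof.
move=> Kd /(k_next_moduloP Kd)[j [/andP[j_pos j_le] vs v_idx]] xv.
have := closed_nbhd_sorted_ltn_index (closed_nbhd_sorted_self x) vs xv.
move: Kd v_idx; set s := nbhd x; set i := index x s; set d := size s => Kd v_idx.
rewrite v_idx; case: (leqP d (i + j)) v_idx => [wrap|no_wrap];
  rewrite ?mul1n ?mul0n ?subn0 => v_idx i_lt_v; first lia.
apply: leq_ltn_trans (@card_index_window _ s _ i (i + j) _ _) _; last lia.
  exact: closed_nbhd_sorted_uniq.
move=> y; rewrite inE => /and3P[exy xy yv].
have ys : y \in s by rewrite mem_closed_nbhd_sorted exy orbT.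
by rewrite ys -v_idx !closed_nbhd_sorted_ltn_index ?closed_nbhd_sorted_self.
Qed.

Lemma k_next_modulo_wrap K x v :
  K < size (nbhd x) -> v \in k_next_modulo e id K x -> id v < id x ->
  #|[set y | e x y & id x < id y]| < K.
Proof.
move=> Kd /(k_next_moduloP Kd)[j [/andP[j_pos j_le] vs v_idx]] vx.
have := closed_nbhd_sorted_ltn_index vs (closed_nbhd_sorted_self x) vx.
move: Kd v_idx; set s := nbhd x; set i := index x s; set d := size s => Kd v_idx.
rewrite v_idx; case: (leqP d (i + j)) => [wrap|no_wrap];
  rewrite ?mul1n ?mul0n ?subn0 => v_lt_i; last lia.
apply: leq_ltn_trans (@card_index_window _ s _ i d _ _) _; last lia.
  exact: closed_nbhd_sorted_uniq.
move=> y; rewrite inE => /andP[exy xy].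
have ys : y \in s by rewrite mem_closed_nbhd_sorted exy orbT.
by rewrite ys index_mem ys closed_nbhd_sorted_ltn_index ?closed_nbhd_sorted_self.
Qed.

End KNextModulo.

Definition selectors (T : finType) (e : rel T) (id : T -> nat) K v : {set T} :=
  [set u | (v \in k_next_modulo e id K u) && (u != v)].

Section DegreeG'.
Variables (T : finType) (e : rel T) (id : T -> nat) (c K : nat).
Hypotheses (e_sym : symmetric e) (e_irr : irreflexive e) (id_inj : injective id).
Hypotheses (e_indep : nbr_indep_le e c) (K_le_deg : forall v, K <= deg e v).

Lemma K_lt_size_closed_nbhd x : K < size (closed_nbhd_sorted e id x).
Proof. by rewrite (size_closed_nbhd_sorted id e_irr) ltnS. Qed.

Lemma selectors_sub_nbhd v : selectors e id K v \subset [set u | e v u].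
Proof.
apply/subsetP => u; rewrite !inE => /andP[vu uv]; rewrite e_sym.
by apply: k_next_modulo_nbr vu _; rewrite ?K_lt_size_closed_nbhd // eq_sym.
Qed.

Lemma card_selectors v : #|selectors e id K v| <= 2 * (K * c).
Proof.
set sel := selectors e id K v.
pose low := sel :&: [set u | id u < id v]; pose high := sel :&: [set u | id v < id u].
have sparse (U : {set T}) : U \subset sel ->
    {in U, forall x, #|[set y in U | e x y & id x < id y]| < K} -> #|U| <= K * c.
  move=> Usel; apply: card_sparse_nbhd_subset e_sym e_irr id_inj e_indep _.
  exact: subset_trans Usel (selectors_sub_nbhd v).
have low_small : #|low| <= K * c.
  apply: sparse; first exact: subsetIl.
  move=> x /setIP[]; rewrite !inE => /andP[vx _] xv.
  apply: leq_ltn_trans (k_next_modulo_between (K_lt_size_closed_nbhd x) vx xv).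
  apply/subset_leq_card/subsetP => y; rewrite !inE.
  by case/and3P => /andP[_ ->] -> ->.
have high_small : #|high| <= K * c.
  apply: sparse; first exact: subsetIl.
  move=> x /setIP[]; rewrite !inE => /andP[vx _] vx_id.
  apply: leq_ltn_trans (k_next_modulo_wrap (K_lt_size_closed_nbhd x) vx vx_id).
  by apply/subset_leq_card/subsetP => y; rewrite !inE => /and3P[_ -> ->].
have sel_split : sel \subset low :|: high.
  apply/subsetP => u; rewrite !inE => /andP[-> uv]; rewrite uv /=.
  by case: ltngtP => // /id_inj eq_uv; rewrite eq_uv eqxx in uv.
apply: leq_trans (subset_leq_card sel_split) _.
by apply: leq_trans (leq_card_setU low high).1 _; rewrite mul2n -addnn leq_add.
Qed.

Lemma card_nbhd_G' v : #|[set u | eG' e id K v u]| <= K.+1 + 2 * (K * c).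
Proof.
have N'_sub : [set u | eG' e id K v u] \subset
    [set u in k_next_modulo e id K v] :|: (v |: selectors e id K v).
  apply/subsetP => u; rewrite !inE /eG' => /orP[-> // | vu].
  by case: eqVneq => [-> | uv]; rewrite ?vu ?orbT.
apply: leq_trans (subset_leq_card N'_sub) _.
apply: leq_trans (leq_card_setU _ _).1 _; rewrite -[K.+1]addn1 -addnA leq_add //.
  rewrite cardsE (leq_trans (card_size _)) //.
  by rewrite /k_next_modulo size_map size_iota.
by rewrite cardsU1 (leq_add (leq_b1 _) (card_selectors v)).
Qed.

Lemma maxdeg_G'_le : 0 < K -> maxdeg_G' e id K <= K * (2 + 2 * c).
Proof.
by move=> K_pos; apply/bigmax_leqP => v _; apply: leq_trans (card_nbhd_G' v) _; lia.
Qed.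

End DegreeG'.

Theorem lemma2 :
  forall c A B : nat, exists C : nat,
  forall (T : finType) (e : rel T) (id : T -> nat),
    symmetric e -> irreflexive e -> injective id ->
    nbr_indep_le e c ->
  forall K : nat, 0 < K -> (forall v : T, K <= deg e v) ->
  forall (col : T -> nat) (linial_rounds : nat),
    two_hop_coloring e id K col ->
    num_colors col <= A * (maxdeg_G' e id K) ^ 4 ->
    linial_rounds <= logstar #|T| + B ->
    efficient_vm_rounds linial_rounds col <= C * (logstar #|T| + K ^ 4).
Proof.
move=> c A B; exists (2 + B + A * (2 + 2 * c) ^ 4).
(* Only the number of colors matters, not the validity of the coloring. *)
move=> T e id e_sym e_irr id_inj e_indep K K_pos K_le_deg col L _ ncol_le L_le.
have ncol_le' : num_colors col <= A * (2 + 2 * c) ^ 4 * K ^ 4.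
  rewrite (leq_trans ncol_le) // -mulnA leq_mul2l -expnMn mulnC leq_exp2r //.
  by rewrite (maxdeg_G'_le e_sym e_irr id_inj e_indep K_le_deg K_pos) orbT.
have K4_pos : 0 < K ^ 4 by rewrite expn_gt0 K_pos.
rewrite /efficient_vm_rounds; move: ncol_le' L_le K4_pos.
set ls := logstar #|T|; set K4 := K ^ 4; nia.
Qed.
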